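(* Let $a,b\in(\frac1{10},10)$, $A=\begin{pmatrix}a&0\\0&b\end{pmatrix}$, and for integers $1\le k\le k'\le2k$ let $u_1=\cos(kx)e^{-k\sqrt a\,t}$, $u_2=\cos(k'y)e^{-k'\sqrt b\,t}$ (solutions of $\ddot u+\operatorname{div}(A\nabla u)=0$). There exist universal constants $D>0$ and $M$ such that for every $0<\varepsilon<D$ and all such $k,k'$ with $\varepsilon^{-1/4}\le k,k'\le\varepsilon^{-1/3}$: (i) there exist a $C^2$ function $u$ and a $C^1$ real $2\times 2$ matrix function $\tilde A$ in the regularity class $R(20,10)$ with $\ddot u+\operatorname{div}(\tilde A\nabla u)=0$ on $\mathbb{T}^2\times\mathbb{R}$, $u=u_1$ and $\tilde A=A$ for $t\le0$, $u=u_1+\varepsilon u_2$ and $\tilde A=A$ for $t\ge\varepsilon^{1/3}$; and for $t\in[0,\varepsilon^{1/3}]$, $u=f(t)\cos(kx)+g(t)\cos(k'y)$ with $f,g\in C^2$, $|f^{(\alpha)}(t)|\le Mk^\alpha e^{-k\sqrt a\,t}$ and $|g^{(\alpha)}(t)|\le M(k')^\alpha\varepsilon^{(3-\alpha)/3}e^{-k'\sqrt b\,t}$ for $0\le\alpha\le2$; (ii) similarly there exist such $u,\tilde A$ (same regularity class, same time interval $[0,\varepsilon^{1/3}]$) with $u=\varepsilon u_1+u_2$ for $t\le0$ and $u=u_2$ for $t\ge\varepsilon^{1/3}$, $\tilde A=A$ outside $[0,\varepsilon^{1/3}]$, and for $t\in[0,\varepsilon^{1/3}]$, $u=f(t)\cos(kx)+g(t)\cos(k'y)$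 with $f,g\in C^2$, $|f^{(\alpha)}(t)|\le Mk^\alpha\varepsilon^{(3-\alpha)/3}e^{-k\sqrt a\,t}$ and $|g^{(\alpha)}(t)|\le M(k')^\alpha e^{-k'\sqrt b\,t}$ for $0\le\alpha\le2$.
   Context: $\mathbb{T}^2=(\mathbb{R}/2\pi\mathbb{Z})^2$ with coordinates $(x,y)$; $t$ the third coordinate. $\ddot u+\operatorname{div}(A\nabla u)$ means $\partial_t^2u+\sum_{i,j\in\{x,y\}}\partial_i(A_{ij}\partial_ju)$. Regularity class $R(\Lambda,C)$: $\Lambda^{-1}|\xi|^2\le\xi^TA\xi\le\Lambda|\xi|^2$ for all $\xi\in\mathbb{R}^2$ at every point, and the entries of $A$ are $C^1$ with all first partial derivatives in $x,y,t$ bounded by $C$ in absolute value. *)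

From Stdlib Require Import Reals Lra.
From Coquelicot Require Import Coquelicot.
Open Scope R_scope.

(* Functions on T^2 x R are represented as functions R -> R -> R -> R
   (arguments x, y, t) that are 2*PI-periodic in x and y. *)
Definition periodic3 (f : R -> R -> R -> R) : Prop :=
  forall x y t, f (x + 2 * PI) y t = f x y t /\ f x (y + 2 * PI) t = f x y t.

Definition cont3 (f : R -> R -> R -> R) : Prop :=
  forall x y t eps, 0 < eps -> exists delta, 0 < delta /\
    forall x' y' t', Rabs (x' - x) < delta -> Rabs (y' - y) < delta ->
      Rabs (t' - t) < delta -> Rabs (f x' y' t' - f x y t) < eps.

Definition px (f : R -> R -> R -> R) : R -> R -> R -> R :=
  fun x y t => Derive (fun s => f s y t) x.
Definition py (f : R -> R -> R -> R) : R -> R -> R -> R :=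
  fun x y t => Derive (fun s => f x s t) y.
Definition pt (f : R -> R -> R -> R) : R -> R -> R -> R :=
  fun x y t => Derive (fun s => f x y s) t.

Definition C1_3 (f : R -> R -> R -> R) : Prop :=
  cont3 f /\
  (forall x y t, ex_derive (fun s => f s y t) x /\
                 ex_derive (fun s => f x s t) y /\
                 ex_derive (fun s => f x y s) t) /\
  cont3 (px f) /\ cont3 (py f) /\ cont3 (pt f).

Definition C2_3 (f : R -> R -> R -> R) : Prop :=
  C1_3 f /\ C1_3 (px f) /\ C1_3 (py f) /\ C1_3 (pt f).

Definition C2_1 (f : R -> R) : Prop :=
  (forall t, ex_derive f t) /\ (forall t, ex_derive (Derive_n f 1) t) /\
  (forall t, continuous (Derive_n f 2) t).

Definition reg_class (L C : R) (A11 A12 A21 A22 : R -> R -> R -> R) : Prop :=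
  (forall x y t xi1 xi2,
     / L * (xi1 ^ 2 + xi2 ^ 2)
       <= xi1 * (A11 x y t * xi1 + A12 x y t * xi2)
          + xi2 * (A21 x y t * xi1 + A22 x y t * xi2) /\
     xi1 * (A11 x y t * xi1 + A12 x y t * xi2)
          + xi2 * (A21 x y t * xi1 + A22 x y t * xi2)
       <= L * (xi1 ^ 2 + xi2 ^ 2)) /\
  (forall Aij, (Aij = A11 \/ Aij = A12 \/ Aij = A21 \/ Aij = A22) ->
     C1_3 Aij /\
     forall x y t, Rabs (px Aij x y t) <= C /\ Rabs (py Aij x y t) <= C /\
                   Rabs (pt Aij x y t) <= C).

Definition solves (u A11 A12 A21 A22 : R -> R -> R -> R) : Prop :=
  forall x y t,
    pt (pt u) x y t
    + px (fun x y t => A11 x y t * px u x y t + A12 x y t * py u x y t) x y t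
    + py (fun x y t => A21 x y t * px u x y t + A22 x y t * py u x y t) x y t
    = 0.

Definition is_diag_ab (a b : R) (A11 A12 A21 A22 : R -> R -> R -> R)
  (x y t : R) : Prop :=
  A11 x y t = a /\ A12 x y t = 0 /\ A21 x y t = 0 /\ A22 x y t = b.

Definition admissible (u A11 A12 A21 A22 : R -> R -> R -> R) : Prop :=
  C2_3 u /\ periodic3 u /\
  periodic3 A11 /\ periodic3 A12 /\ periodic3 A21 /\ periodic3 A22 /\
  reg_class 20 10 A11 A12 A21 A22 /\
  solves u A11 A12 A21 A22.

Definition u1 (a : R) (k : nat) : R -> R -> R -> R :=
  fun x y t => cos (INR k * x) * exp (- (INR k * sqrt a * t)).
Definition u2 (b : R) (k' : nat) : R -> R -> R -> R :=
  fun x y t => cos (INR k' * y) * exp (- (INR k' * sqrt b * t)).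

From Stdlib Require Import Reals Lra Lia FunctionalExtensionality.
From Coquelicot Require Import Coquelicot.
Open Scope R_scope.

(* On the layer 0 <= t <= T = eps^(1/3) the dominant mode f(t) cos(kx), f = e^(-p t), is kept and
   the other mode g(t) cos(k'y) is switched on (or off) by a ramp g = T^3 chi(t/T) e^(-q t), with
   chi a C^3 smoothstep.  The ramp misses the free equation by the defect
   g'' - q^2 g = T^3 (chi''/T^2 - 2 q chi'/T) e^(-q t).  Perturbing the matrix to
   A11 = a + (k'/2k) c cos(kx) cos(k'y), A21 = c sin(kx) sin(k'y) adds exactly
   -(k k'/2) c f cos(k'y) to div(A grad u), because sin^2 + cos^2 = 1, so choosing
   c = 2 (g'' - q^2 g) / (k k' f) solves the equation.  Then c = O(T/(k k')) and c' = O(1/(k k')),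
   which are tiny since k' <= 1/T and k k' >= eps^(-1/2); hence the perturbed matrix stays in
   R(20, 10).  Case (ii) exchanges the roles of the two modes and uses 1 - chi. *)


Definition uncurry3 (f : R -> R -> R -> R) (p : (R * R) * R) : R :=
  f (fst (fst p)) (snd (fst p)) (snd p).

Lemma cont3_continuous f : cont3 f <-> forall x y t, continuous (uncurry3 f) ((x, y), t).
Proof.
split.
- intros Hf x y t. apply filterlim_locally. intros e.
  destruct (Hf x y t e (cond_pos e)) as [d [Hd Hball]].
  exists (mkposreal d Hd). intros [[x' y'] t'] [[Bx By] Bt]. now apply Hball.
- intros Hf x y t e He.
  destruct (proj1 (filterlim_locally _ _) (Hf x y t) (mkposreal e He)) as [d Hd].
  exists d. split; [apply cond_pos|]. intros x' y' t' Bx By Bt.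
  exact (Hd ((x', y'), t') (conj (conj Bx By) Bt)).
Qed.

Lemma cont3_plus f g : cont3 f -> cont3 g -> cont3 (fun x y t => f x y t + g x y t).
Proof.
rewrite !cont3_continuous. intros Hf Hg x y t.
apply (continuous_plus (uncurry3 f) (uncurry3 g)); auto.
Qed.

Lemma cont3_mult f g : cont3 f -> cont3 g -> cont3 (fun x y t => f x y t * g x y t).
Proof.
rewrite !cont3_continuous. intros Hf Hg x y t.
apply (continuous_mult (uncurry3 f) (uncurry3 g)); auto.
Qed.

Lemma cont3_of_t p : (forall t, continuous p t) -> cont3 (fun x y t => p t).
Proof.
intros Hp. apply cont3_continuous. intros x y t.
apply (continuous_comp snd p); [apply continuous_snd | apply Hp].
Qed.

Lemma cont3_of_x p : (forall x, continuous p x) -> cont3 (fun x y t => p x).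
Proof.
intros Hp. apply cont3_continuous. intros x y t.
apply (continuous_comp (fun q : (R * R) * R => fst (fst q)) p); [|apply Hp].
apply (continuous_comp fst fst); apply continuous_fst.
Qed.

Lemma cont3_of_y p : (forall y, continuous p y) -> cont3 (fun x y t => p y).
Proof.
intros Hp. apply cont3_continuous. intros x y t.
apply (continuous_comp (fun q : (R * R) * R => snd (fst q)) p); [|apply Hp].
apply (continuous_comp fst snd); [apply continuous_fst | apply continuous_snd].
Qed.

Lemma cont3_const c : cont3 (fun _ _ _ => c).
Proof. apply (cont3_of_t (fun _ => c)). intros; apply continuous_const. Qed.

Lemma continuous_of_ex_derive (f : R -> R) x : ex_derive f x -> continuous f x.
Proof. exact (ex_derive_continuous f x). Qed.

Lemma continuous_cos_mul k x : continuous (fun x => cos (k * x)) x.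
Proof. apply continuous_of_ex_derive. auto_derive. auto. Qed.

Lemma continuous_sin_mul k x : continuous (fun x => sin (k * x)) x.
Proof. apply continuous_of_ex_derive. auto_derive. auto. Qed.

Ltac solve_cont3 := repeat first
  [ apply cont3_plus | apply cont3_mult | apply cont3_const
  | apply (cont3_of_x (fun x => cos (_ * x))), continuous_cos_mul
  | apply (cont3_of_x (fun x => sin (_ * x))), continuous_sin_mul
  | apply (cont3_of_y (fun y => cos (_ * y))), continuous_cos_mul
  | apply (cont3_of_y (fun y => sin (_ * y))), continuous_sin_mul
  | apply cont3_of_t; assumption ].

Lemma C1_3_of_partials F Fx Fy Ft :
  cont3 F -> cont3 Fx -> cont3 Fy -> cont3 Ft ->
  (forall x y t, is_derive (fun s => F s y t) x (Fx x y t) /\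
     is_derive (fun s => F x s t) y (Fy x y t) /\ is_derive (fun s => F x y s) t (Ft x y t)) ->
  C1_3 F /\ px F = Fx /\ py F = Fy /\ pt F = Ft.
Proof.
intros C0 Cx Cy Ct D.
assert (Ex : px F = Fx /\ py F = Fy /\ pt F = Ft).
{ repeat split; do 3 (apply functional_extensionality; intro);
    apply is_derive_unique; apply D. }
destruct Ex as [Ex [Ey Et]]. unfold C1_3. rewrite Ex, Ey, Et.
split; [|tauto]. split; [exact C0|]. split; [|tauto].
intros x y t. destruct (D x y t) as [D1 [D2 D3]].
split; [|split]; eexists; eassumption.
Qed.

(** * Time profiles *)

Definition is_C1 (f df : R -> R) : Prop :=
  (forall t, is_derive f t (df t)) /\ (forall t, continuous df t).

Definition is_C2 (f df d2f : R -> R) : Prop :=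
  (forall t, is_derive f t (df t)) /\ is_C1 df d2f.

Lemma continuous_of_is_derive (f : R -> R) t l : is_derive f t l -> continuous f t.
Proof. intros D. apply continuous_of_ex_derive. now exists l. Qed.

Lemma is_C2_C2_1 f df d2f : is_C2 f df d2f ->
  C2_1 f /\ forall t, Derive_n f 1 t = df t /\ Derive_n f 2 t = d2f t.
Proof.
intros [D1 [D2 C2]].
assert (E1 : forall t, Derive_n f 1 t = df t) by (intro; now apply is_derive_unique).
assert (E2 : forall t, Derive_n f 2 t = d2f t).
{ intro t. simpl. rewrite (Derive_ext _ df) by (intro; now apply is_derive_unique).
  now apply is_derive_unique. }
split; [split; [|split] | auto].
- intro t. now exists (df t).
- intro t. apply (ex_derive_ext df); [intro; now rewrite E1|]. now exists (d2f t).
- intro t. apply (continuous_ext d2f); [intro; now rewrite E2|]. apply C2.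
Qed.

Definition glue (G H : R -> R) (x0 : R) : R -> R :=
  fun x => if Rle_dec x x0 then G x else H x.

Lemma locally_lt x x0 : x < x0 -> locally x (fun y => y < x0).
Proof.
intros h. assert (e : 0 < x0 - x) by lra. exists (mkposreal _ e).
intros y Hy. change (Rabs (y - x) < x0 - x) in Hy. apply Rabs_lt_between in Hy. lra.
Qed.

Lemma locally_gt x x0 : x0 < x -> locally x (fun y => x0 < y).
Proof.
intros h. assert (e : 0 < x - x0) by lra. exists (mkposreal _ e).
intros y Hy. change (Rabs (y - x) < x - x0) in Hy. apply Rabs_lt_between in Hy. lra.
Qed.

Lemma glue_left G H x0 : forall x, x < x0 -> locally x (fun y => G y = glue G H x0 y).
Proof.
intros x h. apply (filter_imp (fun y => y < x0)); [|now apply locally_lt].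
intros y hy. unfold glue. destruct (Rle_dec y x0); [auto|lra].
Qed.

Lemma glue_right G H x0 : forall x, x0 < x -> locally x (fun y => H y = glue G H x0 y).
Proof.
intros x h. apply (filter_imp (fun y => x0 < y)); [|now apply locally_gt].
intros y hy. unfold glue. destruct (Rle_dec y x0); [lra|auto].
Qed.

Lemma is_derive_glue G H G' H' x0 :
  (forall x, is_derive G x (G' x)) -> (forall x, is_derive H x (H' x)) ->
  G x0 = H x0 -> G' x0 = H' x0 -> forall x, is_derive (glue G H x0) x (glue G' H' x0 x).
Proof.
intros DG DH E E' x. unfold glue at 2.
destruct (Rtotal_order x x0) as [h|[<-|h]].
- destruct (Rle_dec x x0); [|lra].
  apply (is_derive_ext_loc G); [now apply glue_left | apply DG].
- destruct (Rle_dec x x); [|lra].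
  apply is_derive_Reals. intros e He.
  destruct (proj1 (is_derive_Reals _ _ _) (DG x) e He) as [d1 D1].
  destruct (proj1 (is_derive_Reals _ _ _) (DH x) e He) as [d2 D2].
  assert (hd : 0 < Rmin d1 d2) by (apply Rmin_pos; apply cond_pos).
  exists (mkposreal _ hd). intros h hn hh. simpl in hh.
  pose proof (Rmin_l d1 d2). pose proof (Rmin_r d1 d2).
  unfold glue. destruct (Rle_dec x x); [|lra]. destruct (Rle_dec (x + h) x).
  + apply D1; auto; lra.
  + rewrite E, E'. apply D2; auto; lra.
- destruct (Rle_dec x x0); [lra|].
  apply (is_derive_ext_loc H); [now apply glue_right | apply DH].
Qed.

Lemma continuous_glue G H x0 :
  (forall x, continuous G x) -> (forall x, continuous H x) ->
  G x0 = H x0 -> forall x, continuous (glue G H x0) x.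
Proof.
intros CG CH E x. destruct (Rtotal_order x x0) as [h|[<-|h]].
- apply (continuous_ext_loc _ G); [now apply glue_left | apply CG].
- intros P [e He]. unfold glue in He at 1. destruct (Rle_dec x x) in He; [|lra].
  assert (L1 := CG x (ball (G x) e) (locally_ball _ _)).
  assert (L2 := CH x (ball (G x) e) ltac:(rewrite E; apply locally_ball)).
  unfold filtermap in *.
  generalize (filter_and _ _ L1 L2). apply filter_imp. intros y [h1 h2]. apply He.
  unfold glue. now destruct (Rle_dec y x).
- apply (continuous_ext_loc _ H); [now apply glue_right | apply CH].
Qed.

(* The degree 7 smoothstep and its derivatives: it goes from 0 to 1 on [0, 1] and its first three
   derivatives vanish at both ends, so extending it by 0 and 1 gives a C^3 function. *)
Definition step_poly s := 35 * s^4 - 84 * s^5 + 70 * s^6 - 20 * s^7.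
Definition step_poly1 s := 140 * s^3 - 420 * s^4 + 420 * s^5 - 140 * s^6.
Definition step_poly2 s := 420 * s^2 - 1680 * s^3 + 2100 * s^4 - 840 * s^5.
Definition step_poly3 s := 840 * s - 5040 * s^2 + 8400 * s^3 - 4200 * s^4.

Definition glue_unit (P : R -> R) (r : R) : R -> R := glue (fun _ => 0) (glue P (fun _ => r) 1) 0.

Definition step := glue_unit step_poly 1.
Definition step1 := glue_unit step_poly1 0.
Definition step2 := glue_unit step_poly2 0.
Definition step3 := glue_unit step_poly3 0.

Lemma is_derive_glue_unit (P Q : R -> R) r :
  (forall s, is_derive P s (Q s)) -> P 0 = 0 -> Q 0 = 0 -> P 1 = r -> Q 1 = 0 ->
  forall s, is_derive (glue_unit P r) s (glue_unit Q 0 s).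
Proof.
intros DP P0 Q0 P1 Q1. apply is_derive_glue.
- intros; auto_derive; auto; ring.
- apply is_derive_glue; auto. intros; auto_derive; auto; ring.
- unfold glue. destruct (Rle_dec 0 1); lra.
- unfold glue. destruct (Rle_dec 0 1); lra.
Qed.

Lemma is_derive_step s : is_derive step s (step1 s).
Proof.
apply is_derive_glue_unit; unfold step_poly, step_poly1; try ring.
intros; auto_derive; auto; ring.
Qed.

Lemma is_derive_step1 s : is_derive step1 s (step2 s).
Proof.
apply is_derive_glue_unit; unfold step_poly1, step_poly2; try ring.
intros; auto_derive; auto; ring.
Qed.

Lemma is_derive_step2 s : is_derive step2 s (step3 s).
Proof.
apply is_derive_glue_unit; unfold step_poly2, step_poly3; try ring.
intros; auto_derive; auto; ring.
Qed.

Lemma continuous_step3 s : continuous step3 s.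
Proof.
apply continuous_glue.
- intros; apply continuous_const.
- apply continuous_glue.
  + intro x. apply continuous_of_ex_derive. unfold step_poly3. auto_derive. auto.
  + intros; apply continuous_const.
  + simpl. unfold step_poly3; ring.
- simpl. unfold glue. destruct (Rle_dec 0 1); [unfold step_poly3; ring | lra].
Qed.

Lemma glue_unit_outside P r s :
  P 1 = r -> (s <= 0 -> glue_unit P r s = 0) /\ (1 <= s -> glue_unit P r s = r).
Proof.
intros E. unfold glue_unit, glue. split; intros.
- destruct (Rle_dec s 0); lra.
- destruct (Rle_dec s 0); [lra|]. destruct (Rle_dec s 1); auto.
  now replace s with 1 by lra.
Qed.

Lemma glue_unit_bound P r B :
  Rabs r <= B -> (forall s, 0 <= s <= 1 -> Rabs (P s) <= B) ->
  forall s, Rabs (glue_unit P r s) <= B.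
Proof.
intros Br BP s. assert (0 <= B) by (pose proof (Rabs_pos r); lra).
unfold glue_unit, glue.
destruct (Rle_dec s 0); [rewrite Rabs_R0; lra|].
destruct (Rle_dec s 1); auto. apply BP; lra.
Qed.

Lemma pow_unit_interval s n : 0 <= s <= 1 -> 0 <= s ^ n <= 1.
Proof. intros h. split; [apply pow_le; lra|]. rewrite <- (pow1 n). apply pow_incr; lra. Qed.

Ltac bound_step_poly s hs :=
  pose proof (pow_unit_interval s 1 hs); pose proof (pow_unit_interval s 2 hs);
  pose proof (pow_unit_interval s 3 hs); pose proof (pow_unit_interval s 4 hs);
  pose proof (pow_unit_interval s 5 hs); pose proof (pow_unit_interval s 6 hs);
  pose proof (pow_unit_interval s 7 hs); rewrite pow_1 in *; apply Rabs_le; lra.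

Lemma step_bounds s : Rabs (step s) <= 209 /\ Rabs (step1 s) <= 1120 /\
  Rabs (step2 s) <= 5040 /\ Rabs (step3 s) <= 18480.
Proof.
repeat split; apply glue_unit_bound; try (rewrite ?Rabs_R0, ?Rabs_R1; lra);
  intros x hx; unfold step_poly, step_poly1, step_poly2, step_poly3; bound_step_poly x hx.
Qed.

Lemma step_outside s : (s <= 0 -> step s = 0) /\ (1 <= s -> step s = 1) /\
  (s <= 0 \/ 1 <= s -> step1 s = 0 /\ step2 s = 0 /\ step3 s = 0).
Proof.
assert (O : forall P, P 1 = 0 -> s <= 0 \/ 1 <= s -> glue_unit P 0 s = 0).
{ intros P E [h|h]; destruct (glue_unit_outside P 0 s E); auto. }
assert (E : step_poly 1 = 1) by (unfold step_poly; ring).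
split; [|split]; intros.
- destruct (glue_unit_outside step_poly 1 s E); auto.
- destruct (glue_unit_outside step_poly 1 s E); auto.
- unfold step1, step2, step3.
  repeat split; apply O; auto; unfold step_poly1, step_poly2, step_poly3; ring.
Qed.

(** * The two-mode ansatz *)

Definition two_mode (k k' : nat) (f g : R -> R) : R -> R -> R -> R :=
  fun x y t => f t * cos (INR k * x) + g t * cos (INR k' * y).
Definition cos_coef (a : R) (k k' : nat) (c : R -> R) : R -> R -> R -> R :=
  fun x y t => a + c t * cos (INR k * x) * cos (INR k' * y).
Definition sin_coef (k k' : nat) (c : R -> R) : R -> R -> R -> R :=
  fun x y t => c t * sin (INR k * x) * sin (INR k' * y).

(* Computes a derivative with [auto_derive], discharging derivability and values of [Derive]
   for the time profiles through the hypotheses [forall t, is_derive h t (dh t)] in context. *)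
Ltac solve_derive :=
  auto_derive; repeat split; try (eexists; eauto; fail);
  repeat match goal with D : forall t, is_derive _ t _ |- _ =>
    rewrite ?(is_derive_unique _ _ _ (D _)); revert D end;
  intros; ring.

Lemma cos_coef_C1 a k k' c dc : is_C1 c dc ->
  C1_3 (cos_coef a k k' c) /\
  px (cos_coef a k k' c) = (fun x y t => (- INR k * c t) * sin (INR k * x) * cos (INR k' * y)) /\
  py (cos_coef a k k' c) = (fun x y t => (- INR k' * c t) * cos (INR k * x) * sin (INR k' * y)) /\
  pt (cos_coef a k k' c) = (fun x y t => dc t * cos (INR k * x) * cos (INR k' * y)).
Proof.
intros [Dc Cdc]. assert (Cc : forall t, continuous c t) by (intro; eapply continuous_of_is_derive, Dc).
apply C1_3_of_partials; unfold cos_coef; try solve_cont3.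
intros x y t; split; [|split]; solve_derive.
Qed.

Lemma sin_coef_C1 k k' c dc : is_C1 c dc ->
  C1_3 (sin_coef k k' c) /\
  px (sin_coef k k' c) = (fun x y t => (INR k * c t) * cos (INR k * x) * sin (INR k' * y)) /\
  py (sin_coef k k' c) = (fun x y t => (INR k' * c t) * sin (INR k * x) * cos (INR k' * y)) /\
  pt (sin_coef k k' c) = (fun x y t => dc t * sin (INR k * x) * sin (INR k' * y)).
Proof.
intros [Dc Cdc]. assert (Cc : forall t, continuous c t) by (intro; eapply continuous_of_is_derive, Dc).
apply C1_3_of_partials; unfold sin_coef; try solve_cont3.
intros x y t; split; [|split]; solve_derive.
Qed.

Lemma two_mode_C2 k k' f f1 f2 g g1 g2 : is_C2 f f1 f2 -> is_C2 g g1 g2 ->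
  C2_3 (two_mode k k' f g) /\
  px (two_mode k k' f g) = (fun x y t => - INR k * f t * sin (INR k * x)) /\
  py (two_mode k k' f g) = (fun x y t => - INR k' * g t * sin (INR k' * y)) /\
  pt (pt (two_mode k k' f g)) = (fun x y t => f2 t * cos (INR k * x) + g2 t * cos (INR k' * y)).
Proof.
intros [Df [Df1 Cf2]] [Dg [Dg1 Cg2]].
assert (Cf : forall t, continuous f t) by (intro; eapply continuous_of_is_derive, Df).
assert (Cf1 : forall t, continuous f1 t) by (intro; eapply continuous_of_is_derive, Df1).
assert (Cg : forall t, continuous g t) by (intro; eapply continuous_of_is_derive, Dg).
assert (Cg1 : forall t, continuous g1 t) by (intro; eapply continuous_of_is_derive, Dg1).
unfold C2_3. destruct (C1_3_of_partials (two_mode k k' f g)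
  (fun x y t => - INR k * f t * sin (INR k * x))
  (fun x y t => - INR k' * g t * sin (INR k' * y))
  (fun x y t => f1 t * cos (INR k * x) + g1 t * cos (INR k' * y))) as [C0 [-> [-> ->]]];
  unfold two_mode; try solve_cont3.
{ intros x y t; split; [|split]; solve_derive. }
destruct (C1_3_of_partials (fun x y t => - INR k * f t * sin (INR k * x))
  (fun x y t => - INR k * f t * (INR k * cos (INR k * x))) (fun x y t => 0)
  (fun x y t => - INR k * f1 t * sin (INR k * x))) as [Cx _]; try solve_cont3.
{ intros x y t; split; [|split]; solve_derive. }
destruct (C1_3_of_partials (fun x y t => - INR k' * g t * sin (INR k' * y))
  (fun x y t => 0) (fun x y t => - INR k' * g t * (INR k' * cos (INR k' * y)))
  (fun x y t => - INR k' * g1 t * sin (INR k' * y))) as [Cy _]; try solve_cont3.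
{ intros x y t; split; [|split]; solve_derive. }
destruct (C1_3_of_partials (fun x y t => f1 t * cos (INR k * x) + g1 t * cos (INR k' * y))
  (fun x y t => f1 t * (- INR k * sin (INR k * x)))
  (fun x y t => g1 t * (- INR k' * sin (INR k' * y)))
  (fun x y t => f2 t * cos (INR k * x) + g2 t * cos (INR k' * y))) as [Ct [_ [_ ->]]];
  try solve_cont3.
{ intros x y t; split; [|split]; solve_derive. }
split; [tauto | split; [|split]; reflexivity].
Qed.

Lemma cos_mul_periodic k x : cos (INR k * (x + 2 * PI)) = cos (INR k * x).
Proof.
replace (INR k * (x + 2 * PI)) with (INR k * x + 2 * INR k * PI) by ring. apply cos_period.
Qed.

Lemma sin_mul_periodic k x : sin (INR k * (x + 2 * PI)) = sin (INR k * x).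
Proof.
replace (INR k * (x + 2 * PI)) with (INR k * x + 2 * INR k * PI) by ring. apply sin_period.
Qed.

Lemma periodic3_two_mode k k' f g : periodic3 (two_mode k k' f g).
Proof. intros x y t. unfold two_mode. now rewrite !cos_mul_periodic. Qed.

Lemma periodic3_cos_coef a k k' c : periodic3 (cos_coef a k k' c).
Proof. intros x y t. unfold cos_coef. now rewrite !cos_mul_periodic. Qed.

Lemma periodic3_sin_coef k k' c : periodic3 (sin_coef k k' c).
Proof. intros x y t. unfold sin_coef. now rewrite !sin_mul_periodic. Qed.

Lemma two_mode_operator a b k k' f f1 f2 g g1 g2 c1 c2 c3 c4 :
  is_C2 f f1 f2 -> is_C2 g g1 g2 ->
  let u := two_mode k k' f g in
  let A11 := cos_coef a k k' c1 in let A12 := sin_coef k k' c2 in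
  let A21 := sin_coef k k' c3 in let A22 := cos_coef b k k' c4 in
  forall x y t,
    pt (pt u) x y t
    + px (fun x y t => A11 x y t * px u x y t + A12 x y t * py u x y t) x y t
    + py (fun x y t => A21 x y t * px u x y t + A22 x y t * py u x y t) x y t
    = (f2 t - a * INR k ^ 2 * f t) * cos (INR k * x)
      + (g2 t - b * INR k' ^ 2 * g t) * cos (INR k' * y)
      - INR k ^ 2 * c1 t * f t * (cos (INR k * x) ^ 2 - sin (INR k * x) ^ 2) * cos (INR k' * y)
      - INR k * INR k' * c2 t * g t * cos (INR k * x) * sin (INR k' * y) ^ 2
      - INR k * INR k' * c3 t * f t * sin (INR k * x) ^ 2 * cos (INR k' * y)
      - INR k' ^ 2 * c4 t * g t * cos (INR k * x) * (cos (INR k' * y) ^ 2 - sin (INR k' * y) ^ 2).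
Proof.
intros Hf Hg u A11 A12 A21 A22 x y t.
destruct (two_mode_C2 k k' f f1 f2 g g1 g2 Hf Hg) as [_ [Px [Py Ptt]]].
unfold u. rewrite Ptt, Px, Py. unfold px, py, A11, A12, A21, A22, cos_coef, sin_coef.
erewrite (is_derive_unique _ x) by (auto_derive; [auto | reflexivity]).
erewrite (is_derive_unique _ y) by (auto_derive; [auto | reflexivity]).
ring.
Qed.

(* The weight [k'/(2k)] on the [cos cos] perturbation makes the [x]-dependence of the coupling
   cancel: [(cos^2 - sin^2)/2 + sin^2 = 1/2]. *)
Lemma solves_first_to_second a b k k' f f1 f2 g g1 g2 c :
  is_C2 f f1 f2 -> is_C2 g g1 g2 -> INR k <> 0 ->
  (forall t, f2 t = a * INR k ^ 2 * f t) ->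
  (forall t, g2 t - b * INR k' ^ 2 * g t = INR k * INR k' / 2 * c t * f t) ->
  solves (two_mode k k' f g) (cos_coef a k k' (fun t => INR k' / (2 * INR k) * c t))
    (sin_coef k k' (fun _ => 0)) (sin_coef k k' c) (cos_coef b k k' (fun _ => 0)).
Proof.
intros Hf Hg Hk Ef Eg x y t.
pose proof (two_mode_operator a b k k' f f1 f2 g g1 g2 (fun t => INR k' / (2 * INR k) * c t)
  (fun _ => 0) c (fun _ => 0) Hf Hg x y t) as E. cbv zeta beta in E.
rewrite E, Ef, Eg.
pose proof (sin2_cos2 (INR k * x)) as Pyth. unfold Rsqr in Pyth.
replace (cos (INR k * x) ^ 2) with (1 - sin (INR k * x) ^ 2) by (rewrite <- Pyth; ring).
field. exact Hk.
Qed.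

Lemma solves_second_to_first a b k k' f f1 f2 g g1 g2 c :
  is_C2 f f1 f2 -> is_C2 g g1 g2 -> INR k' <> 0 ->
  (forall t, g2 t = b * INR k' ^ 2 * g t) ->
  (forall t, f2 t - a * INR k ^ 2 * f t = INR k * INR k' / 2 * c t * g t) ->
  solves (two_mode k k' f g) (cos_coef a k k' (fun _ => 0)) (sin_coef k k' c)
    (sin_coef k k' (fun _ => 0)) (cos_coef b k k' (fun t => INR k / (2 * INR k') * c t)).
Proof.
intros Hf Hg Hk Eg Ef x y t.
pose proof (two_mode_operator a b k k' f f1 f2 g g1 g2 (fun _ => 0) c (fun _ => 0)
  (fun t => INR k / (2 * INR k') * c t) Hf Hg x y t) as E. cbv zeta beta in E.
rewrite E, Ef, Eg.
pose proof (sin2_cos2 (INR k' * y)) as Pyth. unfold Rsqr in Pyth.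
replace (cos (INR k' * y) ^ 2) with (1 - sin (INR k' * y) ^ 2) by (rewrite <- Pyth; ring).
field. exact Hk.
Qed.

Definition small_coef (m : R) (c dc : R -> R) : Prop :=
  is_C1 c dc /\ forall t, m * Rabs (c t) <= 1/100 /\ Rabs (dc t) <= 10.

Lemma small_coef_zero m : 0 <= m -> small_coef m (fun _ => 0) (fun _ => 0).
Proof.
intros hm. split; [split; intro t; [auto_derive; auto | apply continuous_const]|].
intros t. rewrite Rabs_R0. lra.
Qed.

Lemma small_coef_scale m r c dc : 0 <= m -> 0 <= r <= 1 -> small_coef m c dc ->
  small_coef m (fun t => r * c t) (fun t => r * dc t).
Proof.
intros hm hr [[Dc Cdc] B]. split; [split|]; intro t.
- now apply (is_derive_scal c).
- apply (continuous_scal_r r dc), Cdc.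
- destruct (B t) as [B1 B2]. rewrite !Rabs_mult, (Rabs_pos_eq r) by lra.
  pose proof (Rabs_pos (c t)). pose proof (Rabs_pos (dc t)). split; nra.
Qed.

Lemma Rabs_trig_prod_le w s1 s2 : -1 <= s1 <= 1 -> -1 <= s2 <= 1 -> Rabs (w * s1 * s2) <= Rabs w.
Proof.
intros h1 h2. rewrite !Rabs_mult.
assert (Rabs s1 <= 1) by (apply Rabs_le; lra). assert (Rabs s2 <= 1) by (apply Rabs_le; lra).
pose proof (Rabs_pos w); pose proof (Rabs_pos s1); pose proof (Rabs_pos s2).
assert (Rabs w * Rabs s1 <= Rabs w) by nra. nra.
Qed.

Lemma perturbed_diag_elliptic a b p1 p2 p3 p4 x1 x2 : 1/10 < a < 10 -> 1/10 < b < 10 ->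
  Rabs p1 <= 1/100 -> Rabs p2 <= 1/100 -> Rabs p3 <= 1/100 -> Rabs p4 <= 1/100 ->
  / 20 * (x1 ^ 2 + x2 ^ 2)
    <= x1 * ((a + p1) * x1 + p2 * x2) + x2 * (p3 * x1 + (b + p4) * x2) /\
  x1 * ((a + p1) * x1 + p2 * x2) + x2 * (p3 * x1 + (b + p4) * x2) <= 20 * (x1 ^ 2 + x2 ^ 2).
Proof.
intros ha hb h1 h2 h3 h4.
apply Rabs_le_between in h1, h2, h3, h4.
assert (W : 2 * Rabs (x1 * x2) <= x1 ^ 2 + x2 ^ 2).
{ pose proof (pow2_ge_0 (x1 - x2)). pose proof (pow2_ge_0 (x1 + x2)).
  destruct (Rle_dec 0 (x1 * x2)); [rewrite Rabs_pos_eq | rewrite Rabs_left]; nra. }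
assert (P : Rabs ((p2 + p3) * (x1 * x2)) <= 1/100 * (x1 ^ 2 + x2 ^ 2)).
{ rewrite Rabs_mult. assert (Rabs (p2 + p3) <= 1/50) by (apply Rabs_le; lra).
  pose proof (Rabs_pos (x1 * x2)). pose proof (Rabs_pos (p2 + p3)). nra. }
apply Rabs_le_between in P.
assert (E : x1 * ((a + p1) * x1 + p2 * x2) + x2 * (p3 * x1 + (b + p4) * x2)
  = (a + p1) * x1 ^ 2 + (b + p4) * x2 ^ 2 + (p2 + p3) * (x1 * x2)) by ring.
rewrite E. pose proof (pow2_ge_0 x1). pose proof (pow2_ge_0 x2). split; nra.
Qed.

Lemma coef_weights_bound m j c dc t : small_coef m c dc -> 0 <= j <= m ->
  Rabs (- j * c t) <= 10 /\ Rabs (j * c t) <= 10 /\ Rabs (dc t) <= 10.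
Proof.
intros [_ B] hj. destruct (B t) as [B1 B2].
rewrite Rabs_mult, Rabs_Ropp, Rabs_mult, (Rabs_pos_eq j) by lra.
pose proof (Rabs_pos (c t)). repeat split; nra.
Qed.

Lemma cos_coef_gradient_bound a k k' c dc : 0 <= INR k <= INR k' -> small_coef (INR k') c dc ->
  C1_3 (cos_coef a k k' c) /\ forall x y t, Rabs (px (cos_coef a k k' c) x y t) <= 10 /\
    Rabs (py (cos_coef a k k' c) x y t) <= 10 /\ Rabs (pt (cos_coef a k k' c) x y t) <= 10.
Proof.
intros Hk S. destruct (cos_coef_C1 a k k' c dc (proj1 S)) as [C [-> [-> ->]]].
split; [exact C|]. intros x y t.
destruct (coef_weights_bound _ _ c dc t S Hk) as [Bx [_ Bt]].
destruct (coef_weights_bound _ (INR k') c dc t S ltac:(lra)) as [By _].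
repeat split; (eapply Rle_trans; [apply Rabs_trig_prod_le | exact Bx || exact By || exact Bt]);
  apply SIN_bound || apply COS_bound.
Qed.

Lemma sin_coef_gradient_bound k k' c dc : 0 <= INR k <= INR k' -> small_coef (INR k') c dc ->
  C1_3 (sin_coef k k' c) /\ forall x y t, Rabs (px (sin_coef k k' c) x y t) <= 10 /\
    Rabs (py (sin_coef k k' c) x y t) <= 10 /\ Rabs (pt (sin_coef k k' c) x y t) <= 10.
Proof.
intros Hk S. destruct (sin_coef_C1 k k' c dc (proj1 S)) as [C [-> [-> ->]]].
split; [exact C|]. intros x y t.
destruct (coef_weights_bound _ _ c dc t S Hk) as [_ [Bx Bt]].
destruct (coef_weights_bound _ (INR k') c dc t S ltac:(lra)) as [_ [By _]].
repeat split; (eapply Rle_trans; [apply Rabs_trig_prod_le | exact Bx || exact By || exact Bt]);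
  apply SIN_bound || apply COS_bound.
Qed.

Lemma coef_reg_class a b k k' c1 c2 c3 c4 d1 d2 d3 d4 :
  1/10 < a < 10 -> 1/10 < b < 10 -> 1 <= INR k <= INR k' ->
  small_coef (INR k') c1 d1 -> small_coef (INR k') c2 d2 ->
  small_coef (INR k') c3 d3 -> small_coef (INR k') c4 d4 ->
  reg_class 20 10 (cos_coef a k k' c1) (sin_coef k k' c2) (sin_coef k k' c3) (cos_coef b k k' c4).
Proof.
intros Ha Hb Hk S1 S2 S3 S4. split.
- intros x y t xi1 xi2. unfold cos_coef, sin_coef.
  assert (Small : forall c dc s1 s2, small_coef (INR k') c dc -> -1 <= s1 <= 1 -> -1 <= s2 <= 1 ->
    Rabs (c t * s1 * s2) <= 1/100).
  { intros c dc s1 s2 [_ B] h1 h2. destruct (B t) as [B1 _].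
    pose proof (Rabs_trig_prod_le (c t) s1 s2 h1 h2). pose proof (Rabs_pos (c t)). nra. }
  apply perturbed_diag_elliptic; auto; eapply Small; eauto using COS_bound, SIN_bound.
- assert (Hk0 : 0 <= INR k <= INR k') by lra.
  intros Aij [-> | [-> | [-> | ->]]];
    eauto using cos_coef_gradient_bound, sin_coef_gradient_bound.
Qed.

Lemma two_mode_admissible a b k k' f f1 f2 g g1 g2 c1 c2 c3 c4 d1 d2 d3 d4 :
  1/10 < a < 10 -> 1/10 < b < 10 -> 1 <= INR k <= INR k' ->
  is_C2 f f1 f2 -> is_C2 g g1 g2 ->
  small_coef (INR k') c1 d1 -> small_coef (INR k') c2 d2 ->
  small_coef (INR k') c3 d3 -> small_coef (INR k') c4 d4 ->
  solves (two_mode k k' f g)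
    (cos_coef a k k' c1) (sin_coef k k' c2) (sin_coef k k' c3) (cos_coef b k k' c4) ->
  admissible (two_mode k k' f g)
    (cos_coef a k k' c1) (sin_coef k k' c2) (sin_coef k k' c3) (cos_coef b k k' c4).
Proof.
intros Ha Hb Hk Hf Hg S1 S2 S3 S4 Hsol.
split; [exact (proj1 (two_mode_C2 k k' f f1 f2 g g1 g2 Hf Hg))|].
do 5 (split; [apply periodic3_two_mode || apply periodic3_cos_coef || apply periodic3_sin_coef|]).
split; [exact (coef_reg_class a b k k' c1 c2 c3 c4 d1 d2 d3 d4 Ha Hb Hk S1 S2 S3 S4) | exact Hsol].
Qed.

(** * Ramps and the coupling coefficient *)

(* The bounds are the crude ones of the smoothstep and its derivatives on [0, 1]. *)
Definition transition_profile (X0 X1 X2 X3 : R -> R) : Prop :=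
  (forall s, is_derive X0 s (X1 s)) /\ is_C2 X1 X2 X3 /\
  (forall s, Rabs (X0 s) <= 210 /\ Rabs (X1 s) <= 1120 /\
             Rabs (X2 s) <= 5040 /\ Rabs (X3 s) <= 18480) /\
  (forall s, s <= 0 \/ 1 <= s -> X1 s = 0 /\ X2 s = 0 /\ X3 s = 0).

Lemma step_profile : transition_profile step step1 step2 step3.
Proof.
split; [exact is_derive_step|]. split; [split; [exact is_derive_step1|]|split].
- split; [exact is_derive_step2 | exact continuous_step3].
- intro s. destruct (step_bounds s) as [B0 B]. split; [lra | exact B].
- intros s hs. now apply step_outside.
Qed.

Lemma step_down_profile :
  transition_profile (fun s => 1 - step s) (fun s => - step1 s) (fun s => - step2 s)
    (fun s => - step3 s).
Proof.
destruct step_profile as [D0 [[D1 [D2 C3]] [_ O]]].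
split; [|split; [split; [|split] | split]]; intro s.
- solve_derive.
- solve_derive.
- solve_derive.
- apply (continuous_opp step3 s), C3.
- destruct (step_bounds s) as [B0 [B1 [B2 B3]]]. rewrite !Rabs_Ropp.
  repeat split; auto. eapply Rle_trans; [apply Rabs_triang|]. rewrite Rabs_R1, Rabs_Ropp. lra.
- intros hs. destruct (O s hs) as [-> [-> ->]]. repeat split; ring.
Qed.

Definition decay (p t : R) : R := exp (- (p * t)).

Lemma is_C2_decay p : is_C2 (decay p) (fun t => - p * decay p t) (fun t => p ^ 2 * decay p t).
Proof.
unfold decay. split; [|split]; intro t; [solve_derive | solve_derive |].
apply continuous_of_ex_derive. auto_derive. auto.
Qed.

Lemma decay_derive_bound p m n t : (n <= 2)%nat -> 1 <= m -> 0 <= p <= 4 * m ->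
  Rabs (Derive_n (decay p) n t) <= 100000 * m ^ n * exp (- (p * t)).
Proof.
intros hn hm hp. destruct (is_C2_C2_1 _ _ _ (is_C2_decay p)) as [_ D].
destruct (D t) as [D1 D2]. assert (E : 0 < exp (- (p * t))) by apply exp_pos.
assert (p ^ 2 <= 16 * m ^ 2) by nra.
destruct n as [|[|[|n]]]; [| rewrite D1 | rewrite D2 | lia]; simpl Derive_n; unfold decay;
  rewrite ?Rabs_mult, ?Rabs_Ropp, ?(Rabs_pos_eq p), ?(Rabs_pos_eq (p ^ 2)),
    ?(Rabs_pos_eq (exp _)) by (try apply pow2_ge_0; lra); nra.
Qed.

(* [auto_derive] states its equations in [R_AbsRing]; [field] needs them in [R]. *)
Ltac field_R :=
  match goal with |- ?A = ?B => change (A = B :> R) end;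
  unfold Rdiv; field; repeat split; first [assumption | lra | nra].

Definition ramp (T q : R) (X : R -> R) (t : R) : R := T ^ 3 * X (t / T) * exp (- (q * t)).

Lemma is_C2_ramp T q X0 X1 X2 X3 : T <> 0 -> transition_profile X0 X1 X2 X3 ->
  is_C2 (ramp T q X0)
    (fun t => T ^ 3 * (X1 (t / T) / T - q * X0 (t / T)) * exp (- (q * t)))
    (fun t => T ^ 3 * (X2 (t / T) / T ^ 2 - 2 * q * X1 (t / T) / T + q ^ 2 * X0 (t / T))
              * exp (- (q * t))).
Proof.
intros hT [D0 [[D1 [D2 C3]] _]]. unfold ramp.
split; [|split]; intro t.
- auto_derive; [repeat split; eexists; eauto|].
  rewrite (is_derive_unique _ _ _ (D0 _)). field_R.
- auto_derive; [repeat split; eexists; eauto|].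
  rewrite (is_derive_unique _ _ _ (D0 _)), (is_derive_unique _ _ _ (D1 _)). field_R.
- apply continuous_of_ex_derive. auto_derive. repeat split; eexists; eauto.
Qed.

Lemma Rabs_mul_le x y A B : Rabs x <= A -> Rabs y <= B -> Rabs (x * y) <= A * B.
Proof.
intros h1 h2. rewrite Rabs_mult. pose proof (Rabs_pos x); pose proof (Rabs_pos y).
apply Rmult_le_compat; auto.
Qed.

Lemma ramp_derive_bound T q m X0 X1 X2 X3 n t : transition_profile X0 X1 X2 X3 ->
  0 < T <= 1 -> 1 <= m -> 0 <= q <= 4 * m -> (n <= 2)%nat ->
  Rabs (Derive_n (ramp T q X0) n t) <= 100000 * m ^ n * T ^ (3 - n) * exp (- (q * t)).
Proof.
intros HX hT hm hq hn.
destruct (is_C2_C2_1 _ _ _ (is_C2_ramp T q X0 X1 X2 X3 ltac:(lra) HX)) as [_ D].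
destruct (D t) as [D1 D2]. destruct HX as [_ [_ [B _]]].
destruct (B (t / T)) as [B0 [B1 [B2 _]]].
set (x0 := X0 (t / T)) in *. set (x1 := X1 (t / T)) in *. set (x2 := X2 (t / T)) in *.
set (E := exp (- (q * t))) in *. assert (hE : 0 < E) by apply exp_pos.
assert (hqT : 0 <= q * T <= 4 * m) by nra.
assert (Scale : forall c Y M, 0 <= c -> Rabs Y <= M -> Rabs (c * Y * E) <= M * c * E).
{ intros c Y M hc hY. rewrite !Rabs_mult, (Rabs_pos_eq c), (Rabs_pos_eq E) by lra.
  apply Rmult_le_compat_r; [lra|]. rewrite Rmult_comm. now apply Rmult_le_compat_r. }
destruct n as [|[|[|n]]]; [| rewrite D1 | rewrite D2 | lia]; simpl Derive_n; simpl (3 - _)%nat.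
- unfold ramp. fold x0. apply Scale; [apply pow_le; lra | rewrite pow_O; lra].
- replace (T ^ 3 * (x1 / T - q * x0) * E) with (T ^ 2 * (x1 - (q * T) * x0) * E) by (field; lra).
  apply Scale; [apply pow_le; lra|].
  eapply Rle_trans; [apply Rabs_triang|]. rewrite Rabs_Ropp.
  assert (Rabs ((q * T) * x0) <= 4 * m * 210) by (apply Rabs_mul_le; auto; rewrite Rabs_pos_eq; lra).
  rewrite pow_1. lra.
- replace (T ^ 3 * (x2 / T ^ 2 - 2 * q * x1 / T + q ^ 2 * x0) * E)
    with (T ^ 1 * (x2 - 2 * (q * T) * x1 + (q * T) ^ 2 * x0) * E) by (field; lra).
  apply Scale; [apply pow_le; lra|].
  assert (Rabs (2 * (q * T) * x1) <= 8 * m * 1120) by (apply Rabs_mul_le; auto; rewrite Rabs_pos_eq; lra).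
  assert (Rabs ((q * T) ^ 2 * x0) <= 16 * m ^ 2 * 210) by (apply Rabs_mul_le; auto; rewrite Rabs_pos_eq; nra).
  eapply Rle_trans; [apply Rabs_triang|]. eapply Rle_trans; [apply Rplus_le_compat_r, Rabs_triang|].
  rewrite Rabs_Ropp. nra.
Qed.

Lemma exp_le_81 x : x <= 4 -> exp x <= 81.
Proof.
intros h. assert (exp x <= exp 4) by (destruct (Req_dec x 4); [subst; lra | left; apply exp_increasing; lra]).
assert (E : exp 4 = exp 1 * exp 1 * exp 1 * exp 1) by (rewrite <- !exp_plus; f_equal; ring).
pose proof exp_le_3. pose proof (exp_pos 1).
assert (exp 1 * exp 1 <= 9) by nra. assert (exp 1 * exp 1 * exp 1 <= 27) by nra. nra.
Qed.

Lemma coupling_value_bound T kr ks q e x1 x2 :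
  0 < T -> 10 ^ 13 * T <= 1 -> 1 <= kr -> 1 <= ks -> ks * T <= 1 -> 0 <= q <= 4 * ks ->
  0 < e <= 81 -> Rabs x1 <= 1120 -> Rabs x2 <= 5040 ->
  ks * Rabs (2 * T ^ 3 / (kr * ks) * e * (x2 / T ^ 2 - 2 * q * x1 / T)) <= 1/100.
Proof.
intros hT hT13 hkr hks hksT hq he h1 h2.
replace (2 * T ^ 3 / (kr * ks) * e * (x2 / T ^ 2 - 2 * q * x1 / T))
  with ((2 * e * T / kr / ks) * (x2 - 2 * (q * T) * x1)) by (field; lra).
assert (W : 0 <= 2 * e * T / kr <= 162 * T).
{ split; [apply Rmult_le_pos; [nra | left; apply Rinv_0_lt_compat; lra]|].
  apply Rmult_le_reg_r with kr; [lra|]. unfold Rdiv. rewrite Rmult_assoc, Rinv_l by lra. nra. }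
assert (Rabs (2 * (q * T) * x1) <= 8 * 1120) by (apply Rabs_mul_le; auto; rewrite Rabs_pos_eq; nra).
assert (Y : Rabs (x2 - 2 * (q * T) * x1) <= 14000).
{ eapply Rle_trans; [apply Rabs_triang|]. rewrite Rabs_Ropp. lra. }
rewrite Rabs_mult, (Rabs_pos_eq (2 * e * T / kr / ks)).
2: { unfold Rdiv at 1. apply Rmult_le_pos; [lra | left; apply Rinv_0_lt_compat; lra]. }
replace (ks * (2 * e * T / kr / ks * Rabs (x2 - 2 * (q * T) * x1)))
  with (2 * e * T / kr * Rabs (x2 - 2 * (q * T) * x1)) by (field; lra).
pose proof (Rabs_pos (x2 - 2 * (q * T) * x1)). simpl in hT13. nra.
Qed.

Lemma coupling_deriv_bound T kr ks r q e x1 x2 x3 :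
  0 < T -> 1 <= kr -> 1 <= ks -> 10 ^ 7 <= kr * ks -> 0 <= q * T <= 4 -> Rabs (r * T) <= 4 ->
  0 < e <= 81 -> Rabs x1 <= 1120 -> Rabs x2 <= 5040 -> Rabs x3 <= 18480 ->
  Rabs (2 * T ^ 3 / (kr * ks) * e
        * (r * (x2 / T ^ 2 - 2 * q * x1 / T) + x3 / T ^ 3 - 2 * q * x2 / T ^ 2)) <= 10.
Proof.
intros hT hkr hks hkk hq hr he h1 h2 h3.
replace (2 * T ^ 3 / (kr * ks) * e
         * (r * (x2 / T ^ 2 - 2 * q * x1 / T) + x3 / T ^ 3 - 2 * q * x2 / T ^ 2))
  with ((2 * e / (kr * ks)) * ((r * T) * x2 - 2 * (r * T) * ((q * T) * x1) + x3 - 2 * (q * T) * x2))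
  by (field; lra).
assert (A1 : Rabs ((r * T) * x2) <= 4 * 5040) by (apply Rabs_mul_le; auto).
assert (A2 : Rabs ((q * T) * x1) <= 4 * 1120) by (apply Rabs_mul_le; auto; rewrite Rabs_pos_eq; lra).
assert (A3 : Rabs (2 * (r * T) * ((q * T) * x1)) <= 8 * (4 * 1120)).
{ apply Rabs_mul_le; auto. rewrite Rabs_mult, Rabs_pos_eq by lra. lra. }
assert (A4 : Rabs (2 * (q * T) * x2) <= 8 * 5040)
  by (apply Rabs_mul_le; auto; rewrite Rabs_pos_eq; lra).
assert (Y : Rabs ((r * T) * x2 - 2 * (r * T) * ((q * T) * x1) + x3 - 2 * (q * T) * x2) <= 200000).
{ unfold Rminus. eapply Rle_trans; [apply Rabs_triang|]. rewrite Rabs_Ropp.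
  eapply Rle_trans; [apply Rplus_le_compat_r, Rabs_triang|].
  eapply Rle_trans; [apply Rplus_le_compat_r, Rplus_le_compat_r, Rabs_triang|].
  rewrite Rabs_Ropp. lra. }
assert (W : 0 <= 2 * e / (kr * ks) <= 162 / 10 ^ 7).
{ split; [apply Rmult_le_pos; [lra | left; apply Rinv_0_lt_compat; nra]|].
  apply Rmult_le_reg_r with (kr * ks); [nra|]. unfold Rdiv. rewrite Rmult_assoc, Rinv_l by nra.
  simpl in hkk |- *. nra. }
rewrite Rabs_mult, Rabs_pos_eq by lra.
pose proof (Rabs_pos ((r * T) * x2 - 2 * (r * T) * ((q * T) * x1) + x3 - 2 * (q * T) * x2)).
simpl in W. nra.
Qed.

Lemma scaled_time_outside t T : 0 < T -> (t <= 0 -> t / T <= 0) /\ (T <= t -> 1 <= t / T).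
Proof.
intros hT. split; intros h; apply Rmult_le_reg_r with T; try lra;
  unfold Rdiv; rewrite Rmult_assoc, Rinv_l; lra.
Qed.

Lemma continuous_scaled_arg (Y : R -> R) T t :
  (forall s, continuous Y s) -> continuous (fun t => Y (t / T)) t.
Proof.
intros CY. apply (continuous_comp (fun t => t / T) Y); [|apply CY].
apply continuous_of_ex_derive. auto_derive. auto.
Qed.

Lemma coupling_coefficient T kr ks p q X0 X1 X2 X3 : transition_profile X0 X1 X2 X3 ->
  0 < T -> 10 ^ 13 * T <= 1 -> 1 <= kr -> 1 <= ks -> ks * T <= 1 -> 10 ^ 7 <= kr * ks ->
  0 <= p <= 4 * ks -> 0 <= q <= 4 * ks ->
  exists c dc, small_coef ks c dc /\ (forall t, t <= 0 \/ T <= t -> c t = 0) /\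
    forall t, T ^ 3 * (X2 (t / T) / T ^ 2 - 2 * q * X1 (t / T) / T) * exp (- (q * t))
              = kr * ks / 2 * c t * exp (- (p * t)).
Proof.
intros [_ [[D1 [D2 C3]] [B O]]] hT hT13 hkr hks hksT hkk hp hq.
set (K := 2 * T ^ 3 / (kr * ks)).
set (S t := (p - q) * (X2 (t / T) / T ^ 2 - 2 * q * X1 (t / T) / T) - 2 * q * X2 (t / T) / T ^ 2).
exists (fun t => K * exp ((p - q) * t) * (X2 (t / T) / T ^ 2 - 2 * q * X1 (t / T) / T)),
  (fun t => K * exp ((p - q) * t) * (S t + X3 (t / T) / T ^ 3)).
assert (Vanish : forall t, t <= 0 \/ T <= t -> X1 (t / T) = 0 /\ X2 (t / T) = 0 /\ X3 (t / T) = 0).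
{ intros t ht. apply O. destruct (scaled_time_outside t T hT). tauto. }
assert (Outside : forall t, t <= 0 \/ T <= t ->
  X2 (t / T) / T ^ 2 - 2 * q * X1 (t / T) / T = 0 /\ S t + X3 (t / T) / T ^ 3 = 0).
{ intros t ht. unfold S. destruct (Vanish t ht) as [-> [-> ->]]. unfold Rdiv. split; ring. }
split; [split; [split|] | split].
- intro t. unfold S. auto_derive; [repeat split; eexists; eauto|].
  rewrite (is_derive_unique _ _ _ (D1 _)), (is_derive_unique _ _ _ (D2 _)). field_R.
- intro t. apply (continuous_mult (fun t => K * exp ((p - q) * t))).
  + apply continuous_of_ex_derive. auto_derive. auto.
  + apply (continuous_plus S (fun t => X3 (t / T) / T ^ 3)).
    * apply continuous_of_ex_derive. unfold S. auto_derive. repeat split; eexists; eauto.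
    * apply (continuous_mult (fun t => X3 (t / T)) (fun _ => / T ^ 3)).
      -- now apply continuous_scaled_arg.
      -- apply continuous_const.
- intro t. cbv beta. destruct (Rle_dec t 0) as [h|h]; [|destruct (Rle_dec T t) as [h'|h']].
  1, 2: destruct (Outside t ltac:(lra)) as [-> ->]; rewrite Rmult_0_r, Rabs_R0; lra.
  + assert (He : 0 < exp ((p - q) * t) <= 81) by (split; [apply exp_pos | apply exp_le_81; nra]).
    destruct (B (t / T)) as [_ [B1 [B2 B3]]]. split.
    * now apply coupling_value_bound.
    * replace (K * exp ((p - q) * t) * (S t + X3 (t / T) / T ^ 3)) with
        (2 * T ^ 3 / (kr * ks) * exp ((p - q) * t) * ((p - q) * (X2 (t / T) / T ^ 2
          - 2 * q * X1 (t / T) / T) + X3 (t / T) / T ^ 3 - 2 * q * X2 (t / T) / T ^ 2))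
        by (unfold K, S; ring).
      apply coupling_deriv_bound; auto; try nra.
      apply Rabs_le. nra.
- intros t ht. destruct (Outside t ht) as [-> _]. ring.
- intro t. unfold K.
  replace (exp (- (q * t))) with (exp ((p - q) * t) * exp (- (p * t)))
    by (rewrite <- exp_plus; f_equal; ring).
  field. lra.
Qed.

(** * The two transitions *)

Lemma Rpower_pow_mul eps r n : 0 < eps -> Rpower eps (r * INR n) = Rpower eps r ^ n.
Proof. intros h. rewrite <- Rpower_mult. apply Rpower_pow. apply exp_pos. Qed.

Lemma Rpower_third_pow eps n : 0 < eps -> (n <= 3)%nat ->
  Rpower eps ((3 - INR n) / 3) = Rpower eps (1/3) ^ (3 - n).
Proof.
intros h hn. rewrite <- Rpower_pow_mul by exact h. f_equal.
rewrite minus_INR by exact hn. simpl. lra.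
Qed.

Lemma Rpower_third_cube eps : 0 < eps -> Rpower eps (1/3) ^ 3 = eps.
Proof.
intros h. replace 3%nat with (3 - 0)%nat by reflexivity. rewrite <- Rpower_third_pow by (auto || lia).
replace ((3 - INR 0) / 3) with 1 by (simpl; lra). apply Rpower_1, h.
Qed.

Lemma sqrt_bounds a : 1/10 < a < 10 -> 0 <= sqrt a <= 4 /\ sqrt a ^ 2 = a.
Proof.
intros h. assert (E : sqrt a * sqrt a = a) by (apply sqrt_sqrt; lra).
pose proof (sqrt_pos a). repeat split; [lra | nra | simpl; lra].
Qed.

Lemma ratio_le_one j m : 0 < m -> 0 <= j <= 2 * m -> 0 <= j / (2 * m) <= 1.
Proof.
intros hm hj. split.
- apply Rmult_le_pos; [lra | left; apply Rinv_0_lt_compat; lra].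
- apply Rmult_le_reg_r with (2 * m); [lra|]. unfold Rdiv. rewrite Rmult_assoc, Rinv_l; lra.
Qed.

Lemma switch_on_second_mode a b eps k k' :
  1/10 < a < 10 -> 1/10 < b < 10 -> 0 < eps -> 10 ^ 13 * Rpower eps (1/3) <= 1 ->
  1 <= INR k -> INR k <= INR k' <= 2 * INR k -> INR k' * Rpower eps (1/3) <= 1 ->
  10 ^ 7 <= INR k * INR k' ->
  exists (u A11 A12 A21 A22 : R -> R -> R -> R) (f g : R -> R),
     admissible u A11 A12 A21 A22 /\
     (forall x y t, t <= 0 ->
        u x y t = u1 a k x y t /\ is_diag_ab a b A11 A12 A21 A22 x y t) /\
     (forall x y t, Rpower eps (1/3) <= t ->
        u x y t = u1 a k x y t + eps * u2 b k' x y t /\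
        is_diag_ab a b A11 A12 A21 A22 x y t) /\
     C2_1 f /\ C2_1 g /\
     (forall x y t, 0 <= t <= Rpower eps (1/3) ->
        u x y t = f t * cos (INR k * x) + g t * cos (INR k' * y)) /\
     (forall (al : nat) t, (al <= 2)%nat -> 0 <= t <= Rpower eps (1/3) ->
        Rabs (Derive_n f al t) <= 100000 * INR k ^ al * exp (- (INR k * sqrt a * t)) /\
        Rabs (Derive_n g al t) <=
          100000 * INR k' ^ al * Rpower eps ((3 - INR al) / 3)
            * exp (- (INR k' * sqrt b * t))).
Proof.
intros Ha Hb Heps HT13 Hk1 [Hkk Hk2] HkT Hkk7.
set (T := Rpower eps (1/3)) in *. assert (HT : 0 < T) by apply exp_pos.
destruct (sqrt_bounds a Ha) as [Sa Ea]. destruct (sqrt_bounds b Hb) as [Sb Eb].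
set (p := INR k * sqrt a). set (q := INR k' * sqrt b).
destruct (coupling_coefficient T (INR k) (INR k') p q step step1 step2 step3 step_profile)
  as [c [dc [Sc [Vc Ec]]]]; auto; try lra; try (unfold p, q; nra).
pose proof (is_C2_decay p) as Hf.
pose proof (is_C2_ramp T q step step1 step2 step3 ltac:(lra) step_profile) as Hg.
destruct (is_C2_C2_1 _ _ _ Hf) as [Cf _]. destruct (is_C2_C2_1 _ _ _ Hg) as [Cg _].
assert (Hsol : solves (two_mode k k' (decay p) (ramp T q step))
  (cos_coef a k k' (fun t => INR k' / (2 * INR k) * c t)) (sin_coef k k' (fun _ => 0))
  (sin_coef k k' c) (cos_coef b k k' (fun _ => 0))).
{ apply (solves_first_to_second a b k k' _ _ _ _ _ _ c Hf Hg); [lra | |].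
  - intro t. unfold p. rewrite Rpow_mult_distr, Ea. ring.
  - intro t. rewrite <- Ec. unfold q. rewrite Rpow_mult_distr, Eb. unfold ramp. field. lra. }
exists (two_mode k k' (decay p) (ramp T q step)),
  (cos_coef a k k' (fun t => INR k' / (2 * INR k) * c t)), (sin_coef k k' (fun _ => 0)),
  (sin_coef k k' c), (cos_coef b k k' (fun _ => 0)), (decay p), (ramp T q step).
split; [|split; [|split; [|split; [exact Cf | split; [exact Cg | split; [reflexivity|]]]]]].
- refine (two_mode_admissible a b k k' _ _ _ _ _ _ _ _ _ _
    (fun t => INR k' / (2 * INR k) * dc t) (fun _ => 0) dc (fun _ => 0) Ha Hb _ Hf Hg _ _ _ _ Hsol);
    auto; try lra; try (apply small_coef_zero; lra).
  apply small_coef_scale; [lra | apply ratio_le_one; lra | exact Sc].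
- intros x y t ht.
  unfold two_mode, ramp, decay, u1, is_diag_ab, cos_coef, sin_coef.
  rewrite (Vc t (or_introl ht)), (proj1 (step_outside _) (proj1 (scaled_time_outside t T HT) ht)).
  unfold p. repeat split; ring.
- intros x y t ht.
  unfold two_mode, ramp, decay, u1, u2, is_diag_ab, cos_coef, sin_coef.
  rewrite (Vc t (or_intror ht)),
    (proj1 (proj2 (step_outside _)) (proj2 (scaled_time_outside t T HT) ht)),
    <- (Rpower_third_cube eps Heps).
  unfold p, q, T. repeat split; ring.
- intros n t hn ht. rewrite Rpower_third_pow by (auto || lia). split.
  + apply decay_derive_bound; auto. unfold p. nra.
  + apply (ramp_derive_bound T q (INR k') step step1 step2 step3); auto using step_profile; try lra.
    unfold q. nra.
Qed.

Lemma switch_off_first_mode a b eps k k' :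
  1/10 < a < 10 -> 1/10 < b < 10 -> 0 < eps -> 10 ^ 13 * Rpower eps (1/3) <= 1 ->
  1 <= INR k -> INR k <= INR k' <= 2 * INR k -> INR k' * Rpower eps (1/3) <= 1 ->
  10 ^ 7 <= INR k * INR k' ->
  exists (u A11 A12 A21 A22 : R -> R -> R -> R) (f g : R -> R),
     admissible u A11 A12 A21 A22 /\
     (forall x y t, t <= 0 ->
        u x y t = eps * u1 a k x y t + u2 b k' x y t /\
        is_diag_ab a b A11 A12 A21 A22 x y t) /\
     (forall x y t, Rpower eps (1/3) <= t ->
        u x y t = u2 b k' x y t /\ is_diag_ab a b A11 A12 A21 A22 x y t) /\
     C2_1 f /\ C2_1 g /\
     (forall x y t, 0 <= t <= Rpower eps (1/3) ->
        u x y t = f t * cos (INR k * x) + g t * cos (INR k' * y)) /\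
     (forall (al : nat) t, (al <= 2)%nat -> 0 <= t <= Rpower eps (1/3) ->
        Rabs (Derive_n f al t) <=
          100000 * INR k ^ al * Rpower eps ((3 - INR al) / 3)
            * exp (- (INR k * sqrt a * t)) /\
        Rabs (Derive_n g al t) <= 100000 * INR k' ^ al * exp (- (INR k' * sqrt b * t))).
Proof.
intros Ha Hb Heps HT13 Hk1 [Hkk Hk2] HkT Hkk7.
set (T := Rpower eps (1/3)) in *. assert (HT : 0 < T) by apply exp_pos.
destruct (sqrt_bounds a Ha) as [Sa Ea]. destruct (sqrt_bounds b Hb) as [Sb Eb].
set (p := INR k * sqrt a). set (q := INR k' * sqrt b).
set (X := fun s => 1 - step s).
destruct (coupling_coefficient T (INR k) (INR k') q p X _ _ _ step_down_profile)
  as [c [dc [Sc [Vc Ec]]]]; auto; try lra; try (unfold p, q; nra).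
pose proof (is_C2_ramp T p X _ _ _ ltac:(lra) step_down_profile) as Hf.
pose proof (is_C2_decay q) as Hg.
destruct (is_C2_C2_1 _ _ _ Hf) as [Cf _]. destruct (is_C2_C2_1 _ _ _ Hg) as [Cg _].
assert (Hsol : solves (two_mode k k' (ramp T p X) (decay q))
  (cos_coef a k k' (fun _ => 0)) (sin_coef k k' c)
  (sin_coef k k' (fun _ => 0)) (cos_coef b k k' (fun t => INR k / (2 * INR k') * c t))).
{ apply (solves_second_to_first a b k k' _ _ _ _ _ _ c Hf Hg); [lra | |].
  - intro t. unfold q. rewrite Rpow_mult_distr, Eb. ring.
  - intro t. rewrite <- Ec. unfold p. rewrite Rpow_mult_distr, Ea. unfold ramp. field. lra. }
exists (two_mode k k' (ramp T p X) (decay q)),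
  (cos_coef a k k' (fun _ => 0)), (sin_coef k k' c), (sin_coef k k' (fun _ => 0)),
  (cos_coef b k k' (fun t => INR k / (2 * INR k') * c t)), (ramp T p X), (decay q).
split; [|split; [|split; [|split; [exact Cf | split; [exact Cg | split; [reflexivity|]]]]]].
- refine (two_mode_admissible a b k k' _ _ _ _ _ _ _ _ _ _
    (fun _ => 0) dc (fun _ => 0) (fun t => INR k / (2 * INR k') * dc t) Ha Hb _ Hf Hg _ _ _ _ Hsol);
    auto; try lra; try (apply small_coef_zero; lra).
  apply small_coef_scale; [lra | apply ratio_le_one; lra | exact Sc].
- intros x y t ht.
  unfold two_mode, ramp, decay, u1, u2, is_diag_ab, cos_coef, sin_coef, X.
  rewrite (Vc t (or_introl ht)), (proj1 (step_outside _) (proj1 (scaled_time_outside t T HT) ht)),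
    <- (Rpower_third_cube eps Heps).
  unfold p, q, T. repeat split; ring.
- intros x y t ht.
  unfold two_mode, ramp, decay, u2, is_diag_ab, cos_coef, sin_coef, X.
  rewrite (Vc t (or_intror ht)),
    (proj1 (proj2 (step_outside _)) (proj2 (scaled_time_outside t T HT) ht)).
  unfold q. repeat split; ring.
- intros n t hn ht. rewrite Rpower_third_pow by (auto || lia). split.
  + apply (ramp_derive_bound T p (INR k) X _ _ _ n t step_down_profile); auto; try lra.
    unfold p. nra.
  + apply decay_derive_bound; auto; [lra|]. unfold q. nra.
Qed.

Lemma le_one_of_pow_le_one x n : 0 <= x -> (0 < n)%nat -> x ^ n <= 1 -> x <= 1.
Proof.
intros hx hn h. destruct (Rle_dec x 1) as [ok|no]; [exact ok|].
assert (1 < x ^ n) by (apply Rlt_pow_R1; [lra | exact hn]). lra.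
Qed.

Lemma Rpower_small eps : 0 < eps < / 10 ^ 40 ->
  10 ^ 13 * Rpower eps (1/3) <= 1 /\ 10 ^ 10 * Rpower eps (1/4) <= 1.
Proof.
intros [h0 h].
assert (h40 : 10 ^ 40 * eps < 1).
{ apply Rmult_lt_compat_l with (r := 10 ^ 40) in h; [|apply pow_lt; lra].
  rewrite Rinv_r in h; [lra | apply pow_nonzero; lra]. }
assert (Root : forall n : nat, (0 < n)%nat -> Rpower eps (1 / INR n) ^ n = eps).
{ intros n hn. rewrite <- Rpower_pow_mul by exact h0. replace (1 / INR n * INR n) with 1.
  - apply Rpower_1, h0.
  - field. apply not_0_INR. lia. }
split; [apply (le_one_of_pow_le_one _ 3) | apply (le_one_of_pow_le_one _ 4)];
  try lia; try (apply Rmult_le_pos; [apply pow_le; lra | left; apply exp_pos]).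
- rewrite Rpow_mult_distr. replace (1/3) with (1 / INR 3) by (simpl; lra).
  rewrite Root by lia. simpl in h40 |- *. lra.
- rewrite Rpow_mult_distr. replace (1/4) with (1 / INR 4) by (simpl; lra).
  rewrite Root by lia. simpl in h40 |- *. lra.
Qed.

Theorem mainTheorem13 :
  exists D M : R, 0 < D /\
  forall a b : R, 1/10 < a < 10 -> 1/10 < b < 10 ->
  forall eps : R, 0 < eps < D ->
  forall k k' : nat, (1 <= k)%nat -> (k <= k')%nat -> (k' <= 2 * k)%nat ->
    Rpower eps (-(1/4)) <= INR k <= Rpower eps (-(1/3)) ->
    Rpower eps (-(1/4)) <= INR k' <= Rpower eps (-(1/3)) ->
  (exists (u A11 A12 A21 A22 : R -> R -> R -> R) (f g : R -> R),
     admissible u A11 A12 A21 A22 /\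
     (forall x y t, t <= 0 ->
        u x y t = u1 a k x y t /\ is_diag_ab a b A11 A12 A21 A22 x y t) /\
     (forall x y t, Rpower eps (1/3) <= t ->
        u x y t = u1 a k x y t + eps * u2 b k' x y t /\
        is_diag_ab a b A11 A12 A21 A22 x y t) /\
     C2_1 f /\ C2_1 g /\
     (forall x y t, 0 <= t <= Rpower eps (1/3) ->
        u x y t = f t * cos (INR k * x) + g t * cos (INR k' * y)) /\
     (forall (al : nat) t, (al <= 2)%nat -> 0 <= t <= Rpower eps (1/3) ->
        Rabs (Derive_n f al t) <= M * INR k ^ al * exp (- (INR k * sqrt a * t)) /\
        Rabs (Derive_n g al t) <=
          M * INR k' ^ al * Rpower eps ((3 - INR al) / 3)
            * exp (- (INR k' * sqrt b * t)))) /\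
  (exists (u A11 A12 A21 A22 : R -> R -> R -> R) (f g : R -> R),
     admissible u A11 A12 A21 A22 /\
     (forall x y t, t <= 0 ->
        u x y t = eps * u1 a k x y t + u2 b k' x y t /\
        is_diag_ab a b A11 A12 A21 A22 x y t) /\
     (forall x y t, Rpower eps (1/3) <= t ->
        u x y t = u2 b k' x y t /\ is_diag_ab a b A11 A12 A21 A22 x y t) /\
     C2_1 f /\ C2_1 g /\
     (forall x y t, 0 <= t <= Rpower eps (1/3) ->
        u x y t = f t * cos (INR k * x) + g t * cos (INR k' * y)) /\
     (forall (al : nat) t, (al <= 2)%nat -> 0 <= t <= Rpower eps (1/3) ->
        Rabs (Derive_n f al t) <=
          M * INR k ^ al * Rpower eps ((3 - INR al) / 3)
            * exp (- (INR k * sqrt a * t)) /\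
        Rabs (Derive_n g al t) <= M * INR k' ^ al * exp (- (INR k' * sqrt b * t)))).
Proof.
exists (/ 10 ^ 40), 100000. split; [apply Rinv_0_lt_compat, pow_lt; lra|].
intros a b Ha Hb eps Heps k k' hk1 hkk hk2 Hk Hk'.
destruct (Rpower_small eps Heps) as [HT13 HS].
set (T := Rpower eps (1/3)) in *. set (S := Rpower eps (1/4)) in *.
assert (HT : 0 < T) by apply exp_pos. assert (HS0 : 0 < S) by apply exp_pos.
rewrite !Rpower_Ropp in Hk, Hk'. fold T S in Hk, Hk'.
apply le_INR in hk1, hkk, hk2. rewrite mult_INR in hk2. simpl in hk1, hk2.
assert (HkT : INR k' * T <= 1).
{ destruct Hk' as [_ Hk']. apply Rmult_le_compat_r with (r := T) in Hk'; [|lra].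
  rewrite Rinv_l in Hk'; lra. }
assert (Hkk7 : 10 ^ 7 <= INR k * INR k').
{ assert (1 <= INR k * S).
  { destruct Hk as [Hk _]. apply Rmult_le_compat_r with (r := S) in Hk; [|lra].
    rewrite Rinv_l in Hk; lra. }
  assert (10 ^ 10 <= INR k) by (apply Rmult_le_reg_r with S; [exact HS0 | nra]).
  simpl in *. nra. }
split; [apply switch_on_second_mode | apply switch_off_first_mode]; auto; try lra.
Qed.
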